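(* For every $\tau\in\mathbb{H}^2$, $$\theta[\tfrac15;\tfrac15]^5-\theta[\tfrac15;\tfrac35]^5+\theta[\tfrac15;1]^5-\theta[\tfrac15;\tfrac75]^5+\theta[\tfrac15;\tfrac95]^5=0,$$ and $$\theta[\tfrac35;\tfrac15]^5-\theta[\tfrac35;\tfrac35]^5+\theta[\tfrac35;1]^5-\theta[\tfrac35;\tfrac75]^5+\theta[\tfrac35;\tfrac95]^5=0.$$
   Context: Let $\mathbb{H}^2=\{\tau\in\mathbb{C}:\Im\tau>0\}$. For a characteristic $(\epsilon,\epsilon')\in\mathbb{R}^2$, the theta function with characteristic is $$\theta[\epsilon;\epsilon'](\zeta,\tau)=\sum_{n\in\mathbb{Z}}\exp\Big(2\pi i\Big[\tfrac12\big(n+\tfrac{\epsilon}{2}\big)^2\tau+\big(n+\tfrac{\epsilon}{2}\big)\big(\zeta+\tfrac{\epsilon'}{2}\big)\Big]\Big),\quad (\zeta,\tau)\in\mathbb{C}\times\mathbb{H}^2,$$ (usually written with the column $\left[\begin{smallmatrix}\epsilon\\ \epsilon'\end{smallmatrix}\right]$), and the theta constant is $\theta[\epsilon;\epsilon']=\theta[\epsilon;\epsilon'](0,\tau)$, regarded as a function of $\tau$. Here $\theta[\epsilon;\epsilon']^5$ denotes the fifth power of the theta constant. *)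

From Stdlib Require Import Reals ZArith.
From Coquelicot Require Import Coquelicot.
Open Scope R_scope.

Definition Cexp (z : C) : C :=
  (exp (Re z) * cos (Im z), exp (Re z) * sin (Im z)).

Definition theta_term (e e' : R) (zeta tau : C) (n : Z) : C :=
  let a : C := RtoC (IZR n + e / 2) in
  Cexp (2 * PI * Ci * (/2 * (a * a) * tau + a * (zeta + RtoC (e' / 2))))%C.

Fixpoint Csum (f : nat -> C) (k : nat) : C :=
  match k with
  | O => RtoC 0
  | S k' => (Csum f k' + f k')%C
  end.

(* Symmetric partial sums over n = -N .. N. *)
Definition theta_partial (e e' : R) (zeta tau : C) (N : nat) : C :=
  Csum (fun k => theta_term e e' zeta tau (Z.of_nat k - Z.of_nat N)%Z) (2 * N + 1).

(* theta[e;e'](zeta,tau) = sum_{n in Z} ..., the limit of the (absolutely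
   convergent for Im tau > 0) series, taken componentwise. *)
Definition theta (e e' : R) (zeta tau : C) : C :=
  (real (Lim_seq (fun N => Re (theta_partial e e' zeta tau N))),
   real (Lim_seq (fun N => Im (theta_partial e e' zeta tau N)))).

Definition theta_const (e e' : R) (tau : C) : C := theta e e' (RtoC 0) tau.

Definition Cpow5 (z : C) : C := (z * z * z * z * z)%C.

From Stdlib Require Import Reals ZArith List Permutation Lia Lra.
From Coquelicot Require Import Coquelicot.
Open Scope R_scope.

(* Write [e = c/5] with [c] odd and [a = e/2].  Expanding the fifth powers, the
   alternating sum over [e' = (2k+1)/5] becomes a sum over [n] in [Z^5] of
   [exp(pi i Q(n) tau)] times [sum_k (-1)^k exp(pi i (2k+1) A(n) / 5)], where [Q] and
   [A] are the squared norm and the trace of [n + a].  With [h = 2 (n1+...+n5) + c]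
   we have [A = h/2], and the inner sum is a sum over all fifth roots of unity unless
   [5 | h], so it vanishes.  If [h = 5d] then [d] is odd, and shifting every coordinate
   by [d] keeps [Q] and moves [A] by [5d], which flips the sign: the terms cancel in
   pairs.  On the box [[-N, N]^5] of the partial sums the pairing only fails at points
   whose partner leaves the box; these have [Q >= N/2 - a^2], so the partial
   alternating sums are [O(N^5 exp(-pi N Im tau / 2))] and the limit is zero. *)

Definition lsum {A} (f : A -> C) (l : list A) : C :=
  fold_right (fun x s => (f x + s)%C) (RtoC 0) l.

Lemma lsum_app {A} (f : A -> C) l1 l2 :
  lsum f (l1 ++ l2) = (lsum f l1 + lsum f l2)%C.
Proof. induction l1 as [|x l1 IH]; simpl; [ring | rewrite IH; ring]. Qed.

Lemma lsum_map {A B} (f : B -> C) (g : A -> B) l :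
  lsum f (map g l) = lsum (fun x => f (g x)) l.
Proof. induction l as [|x l IH]; simpl; [reflexivity | now rewrite IH]. Qed.

Lemma lsum_ext_in {A} (f g : A -> C) l :
  (forall x, In x l -> f x = g x) -> lsum f l = lsum g l.
Proof.
  induction l as [|x l IH]; simpl; intros E; [reflexivity|].
  rewrite E, IH; auto.
Qed.

Lemma lsum_add {A} (f g : A -> C) l :
  lsum (fun x => f x + g x)%C l = (lsum f l + lsum g l)%C.
Proof. induction l as [|x l IH]; simpl; [ring | rewrite IH; ring]. Qed.

Lemma lsum_sub {A} (f g : A -> C) l :
  lsum (fun x => f x - g x)%C l = (lsum f l - lsum g l)%C.
Proof. induction l as [|x l IH]; simpl; [ring | rewrite IH; ring]. Qed.

Lemma lsum_opp {A} (f : A -> C) l : lsum (fun x => - f x)%C l = (- lsum f l)%C.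
Proof. induction l as [|x l IH]; simpl; [ring | rewrite IH; ring]. Qed.

Lemma lsum_mul_l {A} (f : A -> C) l z : (z * lsum f l)%C = lsum (fun x => z * f x)%C l.
Proof. induction l as [|x l IH]; simpl; [ring | rewrite <- IH; ring]. Qed.

Lemma lsum_mul_prod {A B} (f : A -> C) (g : B -> C) l l' :
  (lsum f l * lsum g l')%C = lsum (fun p => f (fst p) * g (snd p))%C (list_prod l l').
Proof.
  induction l as [|x l IH]; simpl; [ring|].
  rewrite lsum_app, lsum_map, <- IH; simpl.
  rewrite <- (lsum_mul_l g); ring.
Qed.

Lemma lsum_perm {A} (f : A -> C) l l' : Permutation l l' -> lsum f l = lsum f l'.
Proof. induction 1; simpl; try ring; congruence. Qed.

Lemma lsum_filter {A} (p : A -> bool) (f : A -> C) l :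
  lsum f l = (lsum f (filter p l) + lsum f (filter (fun x => negb (p x)) l))%C.
Proof.
  induction l as [|x l IH]; simpl; [ring|].
  destruct (p x); simpl; rewrite IH; ring.
Qed.

Lemma Cmod_lsum_le {A} (f : A -> C) l B :
  (forall x, In x l -> Cmod (f x) <= B) -> Cmod (lsum f l) <= INR (length l) * B.
Proof.
  induction l as [|x l IH]; intros Hf.
  - simpl. rewrite Cmod_0; lra.
  - cbn [length]. rewrite S_INR.
    change (lsum f (x :: l)) with (f x + lsum f l)%C.
    eapply Rle_trans; [apply Cmod_triangle|].
    assert (Hx := Hf x (or_introl eq_refl)).
    assert (Hl := IH (fun y Hy => Hf y (or_intror Hy))). lra.
Qed.

Lemma Csum_lsum f k : Csum f k = lsum f (seq 0 k).
Proof. induction k as [|k IH]; [reflexivity|]. rewrite seq_S, lsum_app, <- IH. simpl. ring. Qed.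

Lemma NoDup_list_prod {A B} (l : list A) (l' : list B) :
  NoDup l -> NoDup l' -> NoDup (list_prod l l').
Proof.
  induction 1 as [|x l Hx Hl IH]; intros Hl'; simpl; [constructor|].
  apply NoDup_app; [| now apply IH |].
  - apply FinFun.Injective_map_NoDup; [|exact Hl']. now intros y z [= ->].
  - intros [u v] Hin Hin'. apply in_map_iff in Hin as [y [[= <- _] _]].
    apply in_prod_iff in Hin' as [Hin' _]. contradiction.
Qed.

Lemma lsum_involution_opp {A} (s : A -> A) (f : A -> C) l :
  NoDup l -> (forall x, In x l -> In (s x) l) -> (forall x, s (s x) = x) ->
  (forall x, In x l -> f (s x) = (- f x)%C) -> lsum f l = RtoC 0.
Proof.
  intros Hl Hstab Hinv Hopp.
  assert (Hperm : Permutation (map s l) l).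
  { apply Permutation_map_same_l.
    - apply FinFun.Injective_map_NoDup; [|exact Hl].
      intros x y E. now rewrite <- (Hinv x), E, Hinv.
    - intros y Hy. apply in_map_iff in Hy as [x [<- Hx]]. auto. }
  assert (E : lsum f l = (- lsum f l)%C).
  { rewrite <- (lsum_perm f _ _ Hperm) at 1.
    rewrite lsum_map, <- lsum_opp. now apply lsum_ext_in. }
  destruct (lsum f l) as [u v]. injection E; intros.
  unfold RtoC; f_equal; lra.
Qed.

Lemma exp_le_mono x y : x <= y -> exp x <= exp y.
Proof. intros [H | ->]; [left; now apply exp_increasing | right; reflexivity]. Qed.

Lemma sqr_shift_ge x a : x ^ 2 / 2 - a ^ 2 <= (x + a) ^ 2.
Proof. assert (0 <= (x + 2 * a) ^ 2) by apply pow2_ge_0. nra. Qed.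

Lemma exp_mult_INR x j : exp (INR j * x) = exp x ^ j.
Proof.
  induction j as [|j IH].
  - simpl. now rewrite Rmult_0_l, exp_0.
  - rewrite S_INR, Rmult_plus_distr_r, Rmult_1_l, exp_plus, IH. simpl. ring.
Qed.

Lemma pow6_le_exp x : 0 <= x -> (x / 6) ^ 6 <= exp x.
Proof.
  intros Hx. replace x with (INR 6 * (x / 6)) at 2 by (simpl; field).
  rewrite exp_mult_INR. apply pow_incr. generalize (exp_ineq1_le (x / 6)). lra.
Qed.

Lemma Cexp_pair_mult a b c d : (Cexp (a, b) * Cexp (c, d))%C = Cexp (a + c, b + d).
Proof.
  unfold Cexp, Cmult; simpl. rewrite exp_plus, cos_plus, sin_plus. f_equal; ring.
Qed.

Lemma Cmod_Cexp x y : Cmod (Cexp (x, y)) = exp x.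
Proof.
  unfold Cmod, Cexp, Re, Im; cbn [fst snd].
  replace ((exp x * cos y) ^ 2 + (exp x * sin y) ^ 2) with (exp x ^ 2)
    by (generalize (sin2_cos2 y); unfold Rsqr; intros H;
        transitivity (exp x ^ 2 * (sin y * sin y + cos y * cos y)); [rewrite H|]; ring).
  apply sqrt_pow2. left; apply exp_pos.
Qed.

Lemma Cexp_0 : Cexp (0, 0) = RtoC 1.
Proof. unfold Cexp, RtoC; simpl. rewrite exp_0, cos_0, sin_0. f_equal; ring. Qed.

Lemma Cexp_pow y (k : nat) : (Cexp (0, y) ^ k)%C = Cexp (0, INR k * y).
Proof.
  induction k as [|k IH].
  - simpl. rewrite Rmult_0_l. now rewrite Cexp_0.
  - rewrite Cpow_S, IH, Cexp_pair_mult, S_INR. f_equal; f_equal; ring.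
Qed.

Lemma Cexp_add_2kPI x y k : Cexp (x, y + 2 * IZR k * PI) = Cexp (x, y).
Proof.
  unfold Cexp; simpl. destruct (Z_le_gt_dec 0 k) as [Hk|Hk].
  - rewrite <- (Z2Nat.id k Hk), <- INR_IZR_INZ, cos_period, sin_period. reflexivity.
  - set (m := Z.to_nat (- k)).
    assert (Ey : y = (y + 2 * IZR k * PI) + 2 * INR m * PI).
    { unfold m. rewrite INR_IZR_INZ, Z2Nat.id, opp_IZR by lia. ring. }
    rewrite Ey at 3 4. now rewrite cos_period, sin_period.
Qed.

Lemma Cexp_add_PI x y : Cexp (x, y + PI) = (- Cexp (x, y))%C.
Proof.
  unfold Cexp, Copp; simpl. rewrite neg_cos, neg_sin. f_equal; ring.
Qed.

Lemma Cexp_add_odd_PI x y k : Cexp (x, y + IZR (2 * k + 1) * PI) = (- Cexp (x, y))%C.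
Proof.
  rewrite <- Cexp_add_PI, <- (Cexp_add_2kPI x (y + PI) k).
  rewrite plus_IZR, mult_IZR. f_equal; f_equal; ring.
Qed.

Lemma Cexp_add_nat_PI x y (k : nat) : Cexp (x, y + INR k * PI) = ((-1) ^ k * Cexp (x, y))%C.
Proof.
  induction k as [|k IH].
  - simpl. rewrite Rmult_0_l, Rplus_0_r. ring.
  - rewrite S_INR, Cpow_S.
    replace (y + (INR k + 1) * PI) with ((y + INR k * PI) + PI) by ring.
    rewrite Cexp_add_PI, IH. ring.
Qed.

Lemma Csum_pow_root_of_unity (z : C) n :
  (z ^ n)%C = RtoC 1 -> z <> RtoC 1 -> Csum (fun k => z ^ k)%C n = RtoC 0.
Proof.
  intros Hn H1.
  assert (Hgeom : forall m, (Csum (fun k => z ^ k)%C m * (z - 1))%C = (z ^ m - 1)%C).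
  { induction m as [|m IH]; simpl; [ring|].
    rewrite Cmult_plus_distr_r, IH. ring. }
  assert (Hz1 : (z - 1)%C <> RtoC 0).
  { intros E. apply H1. rewrite <- (Cplus_0_l 1), <- E. ring. }
  transitivity (Csum (fun k => z ^ k)%C n * (z - 1) / (z - 1))%C.
  - field. exact Hz1.
  - rewrite Hgeom, Hn. unfold Cdiv. ring.
Qed.

(* [exp (pi i (Q tau + e' A))] *)
Definition theta_monomial (tau : C) (e' Q A : R) : C :=
  Cexp (- (PI * Q * Im tau), PI * Q * Re tau + PI * e' * A).

Lemma theta_term_at_0 e e' tau n :
  theta_term e e' (RtoC 0) tau n
  = theta_monomial tau e' ((IZR n + e / 2) ^ 2) (IZR n + e / 2).
Proof.
  unfold theta_term, theta_monomial, Cexp. destruct tau as [x y].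
  unfold Re, Im, Cmult, Cplus, Ci, RtoC, Cinv; cbn [fst snd].
  f_equal; f_equal; f_equal; field.
Qed.

Lemma theta_monomial_mult tau e' Q A Q' A' :
  (theta_monomial tau e' Q A * theta_monomial tau e' Q' A')%C
  = theta_monomial tau e' (Q + Q') (A + A').
Proof. unfold theta_monomial. rewrite Cexp_pair_mult. f_equal; f_equal; ring. Qed.

Lemma Cmod_theta_monomial tau e' Q A :
  Cmod (theta_monomial tau e' Q A) = exp (- (PI * Q * Im tau)).
Proof. apply Cmod_Cexp. Qed.

Definition Z5 := (Z * Z * Z * Z * Z)%type.

Definition z5_sum (x : Z5) : Z :=
  let '((((n1, n2), n3), n4), n5) := x in (n1 + n2 + n3 + n4 + n5)%Z.

Definition z5_shift (x : Z5) (d : Z) : Z5 :=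
  let '((((n1, n2), n3), n4), n5) := x in ((((n1 - d, n2 - d), n3 - d), n4 - d), n5 - d)%Z.

Definition z5_norm (a : R) (x : Z5) : R :=
  let '((((n1, n2), n3), n4), n5) := x in
  (IZR n1 + a) ^ 2 + (IZR n2 + a) ^ 2 + (IZR n3 + a) ^ 2 + (IZR n4 + a) ^ 2 + (IZR n5 + a) ^ 2.

Definition z5_trace (a : R) (x : Z5) : R := IZR (z5_sum x) + 5 * a.

Definition z5_prod (f : Z -> C) (x : Z5) : C :=
  let '((((n1, n2), n3), n4), n5) := x in (f n1 * f n2 * f n3 * f n4 * f n5)%C.

Lemma z5_sum_shift x d : z5_sum (z5_shift x d) = (z5_sum x - 5 * d)%Z.
Proof. destruct x as [[[[n1 n2] n3] n4] n5]; cbn [z5_sum z5_shift]; ring. Qed.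

Lemma z5_shift_add x d d' : z5_shift (z5_shift x d) d' = z5_shift x (d + d').
Proof. destruct x as [[[[n1 n2] n3] n4] n5]; simpl; now rewrite !Z.sub_add_distr. Qed.

Lemma z5_shift_0 x : z5_shift x 0 = x.
Proof. destruct x as [[[[n1 n2] n3] n4] n5]; simpl; now rewrite !Z.sub_0_r. Qed.

Lemma z5_norm_shift a x d :
  z5_norm a (z5_shift x d) = z5_norm a x - 2 * IZR d * z5_trace a x + 5 * IZR d ^ 2.
Proof.
  destruct x as [[[[n1 n2] n3] n4] n5].
  unfold z5_trace; simpl z5_sum; simpl z5_norm. rewrite !minus_IZR, !plus_IZR. ring.
Qed.

Lemma z5_prod_theta_term e e' tau x :
  z5_prod (theta_term e e' (RtoC 0) tau) x
  = theta_monomial tau e' (z5_norm (e / 2) x) (z5_trace (e / 2) x).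
Proof.
  destruct x as [[[[n1 n2] n3] n4] n5].
  unfold z5_prod, z5_trace; simpl z5_sum; simpl z5_norm.
  rewrite !theta_term_at_0, !theta_monomial_mult, !plus_IZR.
  f_equal; ring.
Qed.

Definition odd_fifth (k : Z) : R := IZR (2 * k + 1) / 5.

Definition alt_monomial (tau : C) (Q A : R) : C :=
  (theta_monomial tau (odd_fifth 0) Q A - theta_monomial tau (odd_fifth 1) Q A
   + theta_monomial tau (odd_fifth 2) Q A - theta_monomial tau (odd_fifth 3) Q A
   + theta_monomial tau (odd_fifth 4) Q A)%C.

Lemma alt_monomial_sub_odd_trace tau Q A m :
  alt_monomial tau Q (A - 5 * IZR (2 * m + 1)) = (- alt_monomial tau Q A)%C.
Proof.
  assert (Hk : forall k, theta_monomial tau (odd_fifth k) Q (A - 5 * IZR (2 * m + 1))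
                        = (- theta_monomial tau (odd_fifth k) Q A)%C).
  { intros k. unfold theta_monomial.
    (* [(2k+1)(2m+1)] is odd *)
    rewrite <- (Cexp_add_odd_PI _ _ (- 2 * k * m - k - m - 1)).
    f_equal; f_equal. unfold odd_fifth.
    rewrite !plus_IZR, !mult_IZR, !minus_IZR, !mult_IZR. field. }
  unfold alt_monomial. rewrite !Hk. ring.
Qed.

Lemma alt_monomial_geometric tau Q h :
  alt_monomial tau Q (IZR h / 2)
  = Cmult (Cexp (- (PI * Q * Im tau), PI * Q * Re tau + PI * IZR h / 10))
          (Csum (fun k => Cpow (Cexp (0, PI * IZR (5 + h) / 5)) k) 5).
Proof.
  set (x0 := - (PI * Q * Im tau)).
  set (y0 := PI * Q * Re tau + PI * IZR h / 10).
  set (w := Cexp (0, PI * IZR (5 + h) / 5)).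
  assert (Hterm : forall k : nat,
    ((-1) ^ k * theta_monomial tau (odd_fifth (Z.of_nat k)) Q (IZR h / 2))%C
    = (Cexp (x0, y0) * w ^ k)%C).
  { intros k. unfold w. rewrite Cexp_pow, Cexp_pair_mult, Rplus_0_r.
    replace (y0 + INR k * (PI * IZR (5 + h) / 5))
      with ((y0 + INR k * PI * IZR h / 5) + INR k * PI) by (rewrite plus_IZR; field).
    rewrite Cexp_add_nat_PI. f_equal.
    unfold theta_monomial, odd_fifth. f_equal; f_equal.
    unfold y0. rewrite plus_IZR, mult_IZR, <- INR_IZR_INZ. field. }
  replace (Cexp (x0, y0) * Csum (fun k => w ^ k) 5)%C
    with (Cexp (x0, y0) * w ^ 0 + Cexp (x0, y0) * w ^ 1 + Cexp (x0, y0) * w ^ 2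
          + Cexp (x0, y0) * w ^ 3 + Cexp (x0, y0) * w ^ 4)%C by (simpl; ring).
  rewrite <- !Hterm. unfold alt_monomial. simpl. ring.
Qed.

Lemma alt_monomial_vanishes tau Q h :
  Z.odd h = true -> (h mod 5 <> 0)%Z -> alt_monomial tau Q (IZR h / 2) = RtoC 0.
Proof.
  intros Hodd Hmod. rewrite alt_monomial_geometric, Csum_pow_root_of_unity; [ring| |].
  - rewrite Cexp_pow, <- Cexp_0, <- (Cexp_add_2kPI 0 0 ((5 + h) / 2)).
    assert (Heven : (5 + h = 2 * ((5 + h) / 2))%Z).
    { apply Z.odd_spec in Hodd as [j ->]. Z.div_mod_to_equations. lia. }
    f_equal; f_equal. rewrite Heven at 1. rewrite mult_IZR. simpl INR. field.
  - intros E. apply (f_equal Im) in E.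
    change (exp 0 * sin (PI * IZR (5 + h) / 5) = 0) in E.
    rewrite exp_0, Rmult_1_l in E. apply sin_eq_0_0 in E as [k Hk].
    assert (Hk' : (5 + h = 5 * k)%Z).
    { apply eq_IZR. rewrite mult_IZR.
      apply (Rmult_eq_reg_r PI); [|apply PI_neq0]. lra. }
    apply Hmod. replace h with ((k - 1) * 5)%Z by lia. apply Z.mod_mul. lia.
Qed.

Lemma Cmod_alt_monomial_le tau Q A :
  Cmod (alt_monomial tau Q A) <= 5 * exp (- (PI * Q * Im tau)).
Proof.
  unfold alt_monomial, Cminus.
  set (m k := theta_monomial tau (odd_fifth k) Q A).
  assert (Hm : forall k, Cmod (m k) = exp (- (PI * Q * Im tau)))
    by (intros; apply Cmod_theta_monomial).
  change (Cmod (m 0%Z + - m 1%Z + m 2%Z + - m 3%Z + m 4%Z)%C <= 5 * exp (- (PI * Q * Im tau))).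
  assert (T1 := Cmod_triangle (m 0%Z + - m 1%Z + m 2%Z + - m 3%Z)%C (m 4%Z)).
  assert (T2 := Cmod_triangle (m 0%Z + - m 1%Z + m 2%Z)%C (- m 3%Z)%C).
  assert (T3 := Cmod_triangle (m 0%Z + - m 1%Z)%C (m 2%Z)).
  assert (T4 := Cmod_triangle (m 0%Z) (- m 1%Z)%C).
  rewrite !Cmod_opp, !Hm in *. lra.
Qed.

Lemma z5_trace_shift a x d : z5_trace a (z5_shift x d) = z5_trace a x - 5 * IZR d.
Proof. unfold z5_trace. rewrite z5_sum_shift, minus_IZR, mult_IZR. ring. Qed.

Lemma z5_trace_fifth c x : z5_trace (IZR c / 5 / 2) x = IZR (2 * z5_sum x + c) / 2.
Proof. unfold z5_trace. rewrite plus_IZR, mult_IZR. field. Qed.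

(* The shift by [d] moves the trace by [5 d] and fixes the norm exactly when the
   trace is [5 d / 2]. *)
Definition z5_reflect (c : Z) (x : Z5) : Z5 := z5_shift x ((2 * z5_sum x + c) / 5).

Lemma z5_reflect_involutive c x : z5_reflect c (z5_reflect c x) = x.
Proof.
  unfold z5_reflect at 1 2. rewrite z5_sum_shift.
  set (d := ((2 * z5_sum x + c) / 5)%Z).
  replace (2 * (z5_sum x - 5 * d) + c)%Z with (2 * z5_sum x + c + (- 2 * d) * 5)%Z by ring.
  rewrite Z_div_plus_full by lia. fold d. rewrite z5_shift_add.
  replace (d + (d + -2 * d))%Z with 0%Z by ring. apply z5_shift_0.
Qed.

Definition alt_term (c : Z) (tau : C) (x : Z5) : C :=
  alt_monomial tau (z5_norm (IZR c / 5 / 2) x) (z5_trace (IZR c / 5 / 2) x).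

Lemma alt_term_vanishes c tau x :
  Z.odd c = true -> ((2 * z5_sum x + c) mod 5 <> 0)%Z -> alt_term c tau x = RtoC 0.
Proof.
  intros Hc Hmod. unfold alt_term. rewrite z5_trace_fifth.
  apply alt_monomial_vanishes; [|exact Hmod].
  rewrite Z.odd_add, Z.odd_mul, Hc. reflexivity.
Qed.

Lemma z5_norm_reflect c x : ((2 * z5_sum x + c) mod 5 = 0)%Z ->
  z5_norm (IZR c / 5 / 2) (z5_reflect c x) = z5_norm (IZR c / 5 / 2) x.
Proof.
  intros Hmod. unfold z5_reflect. rewrite z5_norm_shift, z5_trace_fifth.
  set (h := (2 * z5_sum x + c)%Z) in *.
  assert (Hh : h = (5 * (h / 5))%Z) by (Z.div_mod_to_equations; lia).
  assert (E : IZR h = 5 * IZR (h / 5)) by (rewrite Hh at 1; apply mult_IZR).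
  rewrite E. field.
Qed.

Lemma alt_term_reflect c tau x :
  Z.odd c = true -> alt_term c tau (z5_reflect c x) = (- alt_term c tau x)%C.
Proof.
  intros Hc.
  destruct (Z.eq_dec ((2 * z5_sum x + c) mod 5) 0) as [Hmod|Hmod].
  - unfold alt_term at 1. rewrite z5_norm_reflect by exact Hmod.
    unfold z5_reflect. rewrite z5_trace_shift.
    set (h := (2 * z5_sum x + c)%Z) in *.
    (* [h] is odd and divisible by 5, so the shift [h / 5] is odd *)
    assert (Hd : (h / 5 = 2 * ((h / 5 - 1) / 2) + 1)%Z).
    { assert (Hodd : Z.odd h = true)
        by (unfold h; rewrite Z.odd_add, Z.odd_mul, Hc; reflexivity).
      apply Z.odd_spec in Hodd as [j Hj]. Z.div_mod_to_equations. lia. }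
    rewrite Hd. apply alt_monomial_sub_odd_trace.
  - assert (Hmod' : ((2 * z5_sum (z5_reflect c x) + c) mod 5 <> 0)%Z).
    { unfold z5_reflect. rewrite z5_sum_shift.
      replace (2 * (z5_sum x - 5 * ((2 * z5_sum x + c) / 5)) + c)%Z
        with (2 * z5_sum x + c + (- 2 * ((2 * z5_sum x + c) / 5)) * 5)%Z by ring.
      now rewrite Z_mod_plus_full. }
    rewrite !alt_term_vanishes by assumption.
    unfold RtoC, Copp; simpl. f_equal; ring.
Qed.

Lemma Cmod_alt_term_le c tau x : Z.odd c = true ->
  Cmod (alt_term c tau x)
  <= 5 * exp (- (PI * z5_norm (IZR c / 5 / 2) (z5_reflect c x) * Im tau)).
Proof.
  intros Hc.
  destruct (Z.eq_dec ((2 * z5_sum x + c) mod 5) 0) as [Hmod|Hmod].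
  - rewrite z5_norm_reflect by exact Hmod. apply Cmod_alt_monomial_le.
  - rewrite alt_term_vanishes, Cmod_0 by assumption.
    generalize (exp_pos (- (PI * z5_norm (IZR c / 5 / 2) (z5_reflect c x) * Im tau))). lra.
Qed.

Definition zrange (N : nat) : list Z :=
  map (fun k => Z.of_nat k - Z.of_nat N)%Z (seq 0 (2 * N + 1)).

Lemma theta_partial_lsum e e' zeta tau N :
  theta_partial e e' zeta tau N = lsum (theta_term e e' zeta tau) (zrange N).
Proof. unfold theta_partial, zrange. now rewrite Csum_lsum, lsum_map. Qed.

Lemma In_zrange n N : In n (zrange N) <-> (- Z.of_nat N <= n <= Z.of_nat N)%Z.
Proof.
  unfold zrange. rewrite in_map_iff. split.
  - intros [k [<- Hk]]. apply in_seq in Hk. lia.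
  - intros Hn. exists (Z.to_nat (n + Z.of_nat N)). rewrite in_seq. lia.
Qed.

Lemma NoDup_zrange N : NoDup (zrange N).
Proof.
  apply FinFun.Injective_map_NoDup; [intros k k' E; lia | apply seq_NoDup].
Qed.

Lemma lsum_zrange_S f N :
  lsum f (zrange (S N)) = (lsum f (zrange N) + (f (Z.of_nat (S N)) + f (- Z.of_nat (S N))%Z))%C.
Proof.
  unfold zrange. replace (2 * S N + 1)%nat with (S (S (2 * N + 1))) by lia.
  rewrite seq_S, <- cons_seq, <- seq_shift, map_app. cbn [map]. rewrite map_map.
  rewrite lsum_app. cbn [lsum fold_right].
  replace (map (fun k => (Z.of_nat (S k) - Z.of_nat (S N))%Z) (seq 0 (2 * N + 1)))
    with (map (fun k => (Z.of_nat k - Z.of_nat N)%Z) (seq 0 (2 * N + 1)))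
    by (apply map_ext; intros; lia).
  replace (Z.of_nat (0 + S (2 * N + 1)) - Z.of_nat (S N))%Z with (Z.of_nat (S N)) by lia.
  replace (Z.of_nat 0 - Z.of_nat (S N))%Z with (- Z.of_nat (S N))%Z by lia.
  fold (lsum f (map (fun k => (Z.of_nat k - Z.of_nat N)%Z) (seq 0 (2 * N + 1)))). ring.
Qed.

Definition z5_box (l : list Z) : list Z5 :=
  list_prod (list_prod (list_prod (list_prod l l) l) l) l.

Lemma Cpow5_lsum f l : Cpow5 (lsum f l) = lsum (z5_prod f) (z5_box l).
Proof.
  unfold Cpow5, z5_box. rewrite !lsum_mul_prod.
  apply lsum_ext_in. now intros [[[[n1 n2] n3] n4] n5] _.
Qed.

Lemma NoDup_z5_box l : NoDup l -> NoDup (z5_box l).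
Proof. intros Hl. unfold z5_box. repeat apply NoDup_list_prod; assumption. Qed.

Lemma length_z5_box l : length (z5_box l) = (length l ^ 5)%nat.
Proof. unfold z5_box, Z5. rewrite !length_prod. simpl. ring. Qed.

Definition in_zrangeb (N : nat) (n : Z) : bool :=
  ((- Z.of_nat N <=? n)%Z && (n <=? Z.of_nat N)%Z)%bool.

Definition in_z5_boxb (N : nat) (x : Z5) : bool :=
  let '((((n1, n2), n3), n4), n5) := x in
  (in_zrangeb N n1 && in_zrangeb N n2 && in_zrangeb N n3 && in_zrangeb N n4
   && in_zrangeb N n5)%bool.

Lemma In_z5_box_zrange N x : In x (z5_box (zrange N)) <-> in_z5_boxb N x = true.
Proof.
  assert (Hn : forall n, In n (zrange N) <-> in_zrangeb N n = true).
  { intros n. unfold in_zrangeb. rewrite In_zrange, Bool.andb_true_iff, !Z.leb_le. tauto. }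
  destruct x as [[[[n1 n2] n3] n4] n5]. unfold z5_box, in_z5_boxb, Z5 in *.
  rewrite !in_prod_iff, !Bool.andb_true_iff, !Hn. tauto.
Qed.

Lemma z5_norm_out_of_box a N x :
  in_z5_boxb N x = false -> INR N / 2 - a ^ 2 <= z5_norm a x.
Proof.
  assert (Hn : forall n, in_zrangeb N n = false -> INR N / 2 - a ^ 2 <= (IZR n + a) ^ 2).
  { intros n Hn. unfold in_zrangeb in Hn. rewrite Bool.andb_false_iff, !Z.leb_gt in Hn.
    assert (HN : INR N + 1 <= Rabs (IZR n)).
    { rewrite INR_IZR_INZ, <- abs_IZR, <- plus_IZR. apply IZR_le. lia. }
    assert (Hsq : (INR N + 1) ^ 2 <= IZR n ^ 2).
    { rewrite <- (pow2_abs (IZR n)). apply pow_incr. generalize (pos_INR N). lra. }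
    generalize (sqr_shift_ge (IZR n) a) (pos_INR N). nra. }
  destruct x as [[[[n1 n2] n3] n4] n5]. unfold in_z5_boxb, z5_norm.
  assert (H1 := pow2_ge_0 (IZR n1 + a)). assert (H2 := pow2_ge_0 (IZR n2 + a)).
  assert (H3 := pow2_ge_0 (IZR n3 + a)). assert (H4 := pow2_ge_0 (IZR n4 + a)).
  assert (H5 := pow2_ge_0 (IZR n5 + a)).
  intros H. rewrite !Bool.andb_false_iff in H.
  repeat destruct H as [H|H]; apply Hn in H; lra.
Qed.

Definition alt_fifth_powers (F : R -> C) : C :=
  (Cpow5 (F (odd_fifth 0)) - Cpow5 (F (odd_fifth 1)) + Cpow5 (F (odd_fifth 2))
   - Cpow5 (F (odd_fifth 3)) + Cpow5 (F (odd_fifth 4)))%C.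

Lemma alt_fifth_powers_partial c tau N :
  alt_fifth_powers (fun e' => theta_partial (IZR c / 5) e' (RtoC 0) tau N)
  = lsum (alt_term c tau) (z5_box (zrange N)).
Proof.
  unfold alt_fifth_powers, alt_term, alt_monomial.
  rewrite !theta_partial_lsum, !Cpow5_lsum.
  repeat (rewrite <- lsum_sub || rewrite <- lsum_add).
  apply lsum_ext_in. intros x _. now rewrite !z5_prod_theta_term.
Qed.

(* Terms whose reflection stays in the box cancel in pairs; the others have
   their reflection, hence a point of norm at least [N / 2 - a^2], outside. *)
Lemma Cmod_alt_partial_le c tau N : Z.odd c = true -> 0 < Im tau ->
  Cmod (lsum (alt_term c tau) (z5_box (zrange N)))
  <= INR ((2 * N + 1) ^ 5) * (5 * exp (- (PI * (INR N / 2 - (IZR c / 5 / 2) ^ 2) * Im tau))).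
Proof.
  intros Hc Ht.
  set (p := fun x => in_z5_boxb N (z5_reflect c x)).
  rewrite (lsum_filter p).
  assert (Hpaired : lsum (alt_term c tau) (filter p (z5_box (zrange N))) = RtoC 0).
  { apply (lsum_involution_opp (z5_reflect c)).
    - apply NoDup_filter, NoDup_z5_box, NoDup_zrange.
    - intros x. unfold p. rewrite !filter_In, !In_z5_box_zrange, z5_reflect_involutive.
      tauto.
    - apply z5_reflect_involutive.
    - intros x _. now apply alt_term_reflect. }
  rewrite Hpaired, Cplus_0_l.
  eapply Rle_trans; [apply Cmod_lsum_le|].
  - intros x Hx. apply filter_In in Hx as [_ Hx]. unfold p in Hx.
    apply Bool.negb_true_iff, (z5_norm_out_of_box (IZR c / 5 / 2)) in Hx.
    eapply Rle_trans; [now apply Cmod_alt_term_le|].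
    apply Rmult_le_compat_l; [lra|]. apply exp_le_mono, Ropp_le_contravar.
    apply Rmult_le_compat_r; [lra|]. apply Rmult_le_compat_l; [left; apply PI_RGT_0 | exact Hx].
  - apply Rmult_le_compat_r; [apply Rmult_le_pos; [lra | left; apply exp_pos]|].
    apply le_INR. eapply Nat.le_trans; [apply filter_length_le|].
    rewrite length_z5_box. unfold zrange. rewrite length_map, length_seq. lia.
Qed.

Definition is_lim_Cseq (u : nat -> C) (l : C) : Prop :=
  is_lim_seq (fun n => Re (u n)) (Re l) /\ is_lim_seq (fun n => Im (u n)) (Im l).

Lemma is_lim_Cseq_plus u v a b :
  is_lim_Cseq u a -> is_lim_Cseq v b -> is_lim_Cseq (fun n => u n + v n)%C (a + b)%C.
Proof. intros [Hu1 Hu2] [Hv1 Hv2]; split; now apply is_lim_seq_plus'. Qed.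

Lemma is_lim_Cseq_minus u v a b :
  is_lim_Cseq u a -> is_lim_Cseq v b -> is_lim_Cseq (fun n => u n - v n)%C (a - b)%C.
Proof. intros [Hu1 Hu2] [Hv1 Hv2]; split; now apply is_lim_seq_minus'. Qed.

Lemma is_lim_Cseq_mult u v a b :
  is_lim_Cseq u a -> is_lim_Cseq v b -> is_lim_Cseq (fun n => u n * v n)%C (a * b)%C.
Proof.
  intros [Hu1 Hu2] [Hv1 Hv2]; split.
  - apply is_lim_seq_minus'; now apply is_lim_seq_mult'.
  - apply is_lim_seq_plus'; now apply is_lim_seq_mult'.
Qed.

Lemma is_lim_Cseq_Cpow5 u a : is_lim_Cseq u a -> is_lim_Cseq (fun n => Cpow5 (u n)) (Cpow5 a).
Proof. intros H. unfold Cpow5. repeat apply is_lim_Cseq_mult; assumption. Qed.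

Lemma is_lim_Cseq_unique u a b : is_lim_Cseq u a -> is_lim_Cseq u b -> a = b.
Proof.
  intros [Ha1 Ha2] [Hb1 Hb2].
  apply is_lim_seq_unique in Ha1, Ha2, Hb1, Hb2.
  destruct a as [a1 a2], b as [b1 b2]; simpl in *. congruence.
Qed.

Lemma Rabs_Im_le_Cmod z : Rabs (Im z) <= Cmod z.
Proof. eapply Rle_trans; [apply Rmax_r | apply Rmax_Cmod]. Qed.

Lemma is_lim_seq_0_Rabs_le u b :
  (forall n, Rabs (u n) <= b n) -> is_lim_seq b 0 -> is_lim_seq u 0.
Proof.
  intros Hb Hlim. apply is_lim_seq_abs_0.
  apply (is_lim_seq_le_le (fun _ => 0) _ b); [|apply is_lim_seq_const | exact Hlim].
  intros n. split; [apply Rabs_pos | apply Hb].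
Qed.

Lemma is_lim_Cseq_0_Cmod_le u b :
  (forall n, Cmod (u n) <= b n) -> is_lim_seq b 0 -> is_lim_Cseq u (RtoC 0).
Proof.
  intros Hb Hlim. split; apply (is_lim_seq_0_Rabs_le _ b); trivial; intros n;
    eapply Rle_trans; [apply re_le_Cmod | apply Hb | apply Rabs_Im_le_Cmod | apply Hb].
Qed.

Lemma Cmod_theta_term e e' tau n :
  Cmod (theta_term e e' (RtoC 0) tau n) = exp (- (PI * (IZR n + e / 2) ^ 2 * Im tau)).
Proof. rewrite theta_term_at_0. apply Cmod_theta_monomial. Qed.

Lemma Cmod_theta_term_le_geom e e' tau n j : 0 < Im tau -> Z.abs n = Z.of_nat (S j) ->
  Cmod (theta_term e e' (RtoC 0) tau n)
  <= exp (PI * (e / 2) ^ 2 * Im tau) * exp (- (PI * Im tau / 2)) ^ j.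
Proof.
  intros Ht Hn.
  rewrite Cmod_theta_term, <- exp_mult_INR, <- exp_plus. apply exp_le_mono.
  assert (Hsq : IZR n ^ 2 = (INR j + 1) ^ 2).
  { rewrite <- pow2_abs, <- abs_IZR, Hn, <- INR_IZR_INZ, S_INR. reflexivity. }
  assert (Hq := sqr_shift_ge (IZR n) (e / 2)).
  assert (Hj := pos_INR j).
  assert (Hpt : 0 < PI * Im tau) by (apply Rmult_lt_0_compat; [apply PI_RGT_0 | exact Ht]).
  assert (Hpos : 0 <= (IZR n + e / 2) ^ 2 + (e / 2) ^ 2 - INR j / 2) by nra.
  assert (0 <= PI * Im tau * ((IZR n + e / 2) ^ 2 + (e / 2) ^ 2 - INR j / 2))
    by (apply Rmult_le_pos; lra).
  lra.
Qed.

Lemma ex_lim_sum_n_le_geom (g : nat -> R) K r :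
  Rabs r < 1 -> (forall j, Rabs (g j) <= K * r ^ j) -> exists l : R, is_lim_seq (sum_n g) l.
Proof.
  intros Hr Hg.
  assert (Hex : ex_series g).
  { apply (ex_series_le g (fun j => K * r ^ j)); [exact Hg|].
    apply (ex_series_scal_l K (fun j => r ^ j)), ex_series_geom, Hr. }
  destruct Hex as [l Hl]. now exists l.
Qed.

Lemma lsum_zrange_S_sum_n (f : Z -> C) N :
  let D j := (f (Z.of_nat (S j)) + f (- Z.of_nat (S j))%Z)%C in
  lsum f (zrange (S N)) = (f 0%Z + (sum_n (fun j => Re (D j)) N, sum_n (fun j => Im (D j)) N))%C.
Proof.
  intros D. induction N as [|N IH]; rewrite lsum_zrange_S.
  - rewrite !sum_O. change (lsum f (zrange 0)) with (f 0%Z + RtoC 0)%C. fold (D 0%nat).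
    destruct (f 0%Z), (D 0%nat). unfold Cplus; cbn -[sum_n]. f_equal; ring.
  - rewrite IH, !sum_Sn. fold (D (S N)).
    destruct (f 0%Z), (D (S N)). unfold Cplus; cbn -[sum_n]. f_equal; ring.
Qed.

(* Pairing the terms [n] and [-n] reduces to a series in [n > 0]. *)
Lemma lsum_zrange_converges (f : Z -> C) K r : Rabs r < 1 ->
  (forall j, Cmod (f (Z.of_nat (S j)) + f (- Z.of_nat (S j))%Z) <= K * r ^ j) ->
  exists l, is_lim_Cseq (fun N => lsum f (zrange N)) l.
Proof.
  intros Hr HD.
  set (D j := (f (Z.of_nat (S j)) + f (- Z.of_nat (S j))%Z)%C) in HD.
  destruct (ex_lim_sum_n_le_geom (fun j => Re (D j)) K r Hr) as [lre Hre].
  { intros j. eapply Rle_trans; [apply re_le_Cmod | apply HD]. }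
  destruct (ex_lim_sum_n_le_geom (fun j => Im (D j)) K r Hr) as [lim Him].
  { intros j. eapply Rle_trans; [apply Rabs_Im_le_Cmod | apply HD]. }
  exists (f 0%Z + (lre, lim))%C. split; apply is_lim_seq_incr_1.
  - apply (is_lim_seq_ext (fun N => Re (f 0%Z) + sum_n (fun j => Re (D j)) N));
      [intros N; now rewrite lsum_zrange_S_sum_n|].
    apply is_lim_seq_plus'; [apply is_lim_seq_const | exact Hre].
  - apply (is_lim_seq_ext (fun N => Im (f 0%Z) + sum_n (fun j => Im (D j)) N));
      [intros N; now rewrite lsum_zrange_S_sum_n|].
    apply is_lim_seq_plus'; [apply is_lim_seq_const | exact Him].
Qed.

Lemma theta_partial_converges e e' tau : 0 < Im tau ->
  exists l, is_lim_Cseq (theta_partial e e' (RtoC 0) tau) l.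
Proof.
  intros Ht.
  assert (Hpt : 0 < PI * Im tau) by (apply Rmult_lt_0_compat; [apply PI_RGT_0 | exact Ht]).
  set (r := exp (- (PI * Im tau / 2))).
  assert (Hr : Rabs r < 1).
  { unfold r. rewrite Rabs_right by (left; apply exp_pos). rewrite <- exp_0.
    apply exp_increasing. lra. }
  destruct (lsum_zrange_converges (theta_term e e' (RtoC 0) tau)
              (2 * exp (PI * (e / 2) ^ 2 * Im tau)) r Hr) as [l Hl].
  - intros j. eapply Rle_trans; [apply Cmod_triangle|].
    assert (H1 := Cmod_theta_term_le_geom e e' tau (Z.of_nat (S j)) j Ht ltac:(lia)).
    assert (H2 := Cmod_theta_term_le_geom e e' tau (- Z.of_nat (S j)) j Ht ltac:(lia)).
    fold r in H1, H2. lra.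
  - exists l. split; eapply is_lim_seq_ext; try apply Hl;
      intros N; now rewrite theta_partial_lsum.
Qed.

Lemma theta_const_is_lim e e' tau : 0 < Im tau ->
  is_lim_Cseq (theta_partial e e' (RtoC 0) tau) (theta_const e e' tau).
Proof.
  intros Ht. destruct (theta_partial_converges e e' tau Ht) as [l Hl].
  replace (theta_const e e' tau) with l; [exact Hl|].
  destruct Hl as [Hre Him]. unfold theta_const, theta.
  rewrite (is_lim_seq_unique _ _ Hre), (is_lim_seq_unique _ _ Him). now destruct l.
Qed.

Lemma is_lim_seq_poly5_exp_decay y : 0 < y ->
  is_lim_seq (fun N => INR ((2 * N + 1) ^ 5) * exp (- (y * INR N))) 0.
Proof.
  intros Hy.
  set (K := 32 * exp y * 6 ^ 6 / y ^ 6).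
  apply (is_lim_seq_le_le (fun _ => 0) _ (fun N => K * / (INR N + 1))).
  - intros N. set (M := INR N + 1).
    assert (HM : 1 <= M) by (unfold M; generalize (pos_INR N); lra).
    replace (INR ((2 * N + 1) ^ 5)) with ((2 * M - 1) ^ 5)
      by (unfold M; rewrite pow_INR, plus_INR, mult_INR; simpl; ring).
    replace (exp (- (y * INR N))) with (exp y * / exp (y * M))
      by (rewrite <- exp_Ropp, <- exp_plus; f_equal; unfold M; ring).
    assert (HE : (y * M / 6) ^ 6 <= exp (y * M)) by (apply pow6_le_exp; nra).
    assert (HE0 : 0 < (y * M / 6) ^ 6) by (apply pow_lt; nra).
    assert (Hey := exp_pos y).
    assert (H5 : 0 <= (2 * M - 1) ^ 5) by (apply pow_le; lra).
    assert (Hinv : 0 < / exp (y * M)) by (apply Rinv_0_lt_compat, exp_pos).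
    split; [apply Rmult_le_pos; [lra | apply Rmult_le_pos; lra]|].
    apply Rle_trans with ((2 * M) ^ 5 * (exp y * / (y * M / 6) ^ 6)).
    + apply Rmult_le_compat; [lra | apply Rmult_le_pos; lra | apply pow_incr; lra |].
      apply Rmult_le_compat_l; [lra|]. apply Rinv_le_contravar; lra.
    + right. unfold K. field. lra.
  - apply is_lim_seq_const.
  - replace (Finite 0) with (Rbar_mult K 0) by (simpl; f_equal; ring).
    apply is_lim_seq_scal_l.
    assert (Hinf : is_lim_seq (fun N => INR N + 1) p_infty).
    { apply (is_lim_seq_ext (fun N => INR (S N))); [intros; apply S_INR|].
      apply (is_lim_seq_incr_1 INR), is_lim_seq_INR. }
    apply is_lim_seq_inv in Hinf; [exact Hinf | discriminate].
Qed.

Lemma is_lim_Cseq_alt_fifth_powers (F : nat -> R -> C) (G : R -> C) :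
  (forall e', is_lim_Cseq (fun N => F N e') (G e')) ->
  is_lim_Cseq (fun N => alt_fifth_powers (F N)) (alt_fifth_powers G).
Proof.
  intros HF. unfold alt_fifth_powers.
  apply is_lim_Cseq_plus; [apply is_lim_Cseq_minus; [apply is_lim_Cseq_plus;
    [apply is_lim_Cseq_minus|]|]|]; apply is_lim_Cseq_Cpow5, HF.
Qed.

Lemma alt_fifth_powers_theta_const c tau : Z.odd c = true -> 0 < Im tau ->
  alt_fifth_powers (fun e' => theta_const (IZR c / 5) e' tau) = RtoC 0.
Proof.
  intros Hc Ht.
  set (a := IZR c / 5 / 2).
  set (y := PI * Im tau / 2).
  assert (Hy : 0 < y) by (unfold y; generalize PI_RGT_0; nra).
  apply (is_lim_Cseq_unique
           (fun N => alt_fifth_powers (fun e' => theta_partial (IZR c / 5) e' (RtoC 0) tau N))).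
  - apply is_lim_Cseq_alt_fifth_powers. intros e'. now apply theta_const_is_lim.
  - apply (is_lim_Cseq_0_Cmod_le _
             (fun N => 5 * exp (PI * a ^ 2 * Im tau)
                       * (INR ((2 * N + 1) ^ 5) * exp (- (y * INR N))))).
    + intros N. rewrite alt_fifth_powers_partial.
      eapply Rle_trans; [now apply Cmod_alt_partial_le|].
      right. fold a.
      replace (exp (- (PI * (INR N / 2 - a ^ 2) * Im tau)))
        with (exp (PI * a ^ 2 * Im tau) * exp (- (y * INR N)))
        by (rewrite <- exp_plus; f_equal; unfold y; field).
      ring.
    + replace (Finite 0) with (Rbar_mult (5 * exp (PI * a ^ 2 * Im tau)) 0)
        by (simpl; f_equal; ring).
      now apply is_lim_seq_scal_l, is_lim_seq_poly5_exp_decay.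
Qed.

Theorem theorem3p1 (tau : C) (Htau : 0 < Im tau) :
  (Cpow5 (theta_const (1/5) (1/5) tau) - Cpow5 (theta_const (1/5) (3/5) tau)
   + Cpow5 (theta_const (1/5) 1 tau) - Cpow5 (theta_const (1/5) (7/5) tau)
   + Cpow5 (theta_const (1/5) (9/5) tau))%C = RtoC 0
  /\
  (Cpow5 (theta_const (3/5) (1/5) tau) - Cpow5 (theta_const (3/5) (3/5) tau)
   + Cpow5 (theta_const (3/5) 1 tau) - Cpow5 (theta_const (3/5) (7/5) tau)
   + Cpow5 (theta_const (3/5) (9/5) tau))%C = RtoC 0.
Proof.
  assert (E0 : odd_fifth 0 = 1/5) by (unfold odd_fifth; simpl; field).
  assert (E1 : odd_fifth 1 = 3/5) by (unfold odd_fifth; simpl; field).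
  assert (E2 : odd_fifth 2 = 1) by (unfold odd_fifth; simpl; field).
  assert (E3 : odd_fifth 3 = 7/5) by (unfold odd_fifth; simpl; field).
  assert (E4 : odd_fifth 4 = 9/5) by (unfold odd_fifth; simpl; field).
  split.
  - generalize (alt_fifth_powers_theta_const 1 tau eq_refl Htau).
    unfold alt_fifth_powers. now rewrite E0, E1, E2, E3, E4.
  - generalize (alt_fifth_powers_theta_const 3 tau eq_refl Htau).
    unfold alt_fifth_powers. now rewrite E0, E1, E2, E3, E4.
Qed.
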